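(* For every real $\varepsilon$ with $0<\varepsilon<1$, let $\varepsilon'=\varepsilon/(4-2\varepsilon)$ and let $S=\{p,a,b,q\}\subset\mathbb{R}$ with $p=0$, $a=\varepsilon'$, $b=1+\varepsilon'$, $q=1+2\varepsilon'$, equipped with the distance $|xy|$ equal to the absolute difference. Let $G'$ be the path $p,a,b,q$ (a $1$-spanner for $S$), and let $G$ be the graph obtained from $G'$ by the construction in the context with $f=1$ (for any tie-breaking). Then $G$ has edge set $E'\cup\{\{p,b\},\{a,q\}\}$, and for the matching $F=\{\{p,a\},\{b,q\}\}$ we have $\delta_{G\setminus F}(p,q)/\delta_{K_S\setminus F}(p,q)=3-\varepsilon$. In particular the stretch factor $3t$ in Theorem 1 cannot be replaced by any constant smaller than $3t$ in general.
   Context: For a finite metric space $(S,|\cdot|)$, $K_S$ is the complete graph on $S$ with edge weights $|xy|$; $\delta_X(x,y)$ is shortest-path distance in an edge-weighted graph $X$; $X\setminus F$ is $X$ with the edges of $F$ removed. A graph $G'$ on $S$ is a $t$-spanner if $\delta_{G'}(x,y)\le t|xy|$ for all $x,y$. Construction (with $f=1$): for each edge $\{x,y\}$ of $G'=(S,E')$, let $c_{xy}$ be a point of $S\setminus\{x,y\}$ minimizing $|xc|+|cy|$ (ties broken arbitrarily); $G=(S,E)$ with $E=E'\cup\{\{x,c_{xy}\},\{c_{xy},y\}:\{x,y\}\in E'\}$. *)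

From HB Require Import structures.
From mathcomp Require Import all_boot all_order all_algebra.
From mathcomp Require Import all_classical all_reals.
Set Implicit Arguments. Unset Strict Implicit. Unset Printing Implicit Defensive.
Import Order.TTheory GRing.Theory Num.Theory.
Local Open Scope classical_set_scope.
Local Open Scope ring_scope.

Section GraphDefs.
Variables (R : realType) (T : finType).

(* An undirected edge-weighted graph on T is a symmetric relation e : rel T;
   edge weights are given by the metric d. *)

Definition ueq (x y u v : T) : bool := ((x == u) && (y == v)) || ((x == v) && (y == u)).

Definition walk_len (d : T -> T -> R) (x : T) (s : seq T) : R :=
  \sum_(uv <- zip (x :: s) s) d uv.1 uv.2.

Definition sp_dist (e : rel T) (d : T -> T -> R) (x y : T) : R :=
  inf [set l | exists s : seq T, [/\ path e x s, last x s = y & l = walk_len d x s]].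

Definition complete_rel : rel T := fun x y => x != y.

Definition rem_edges (e F : rel T) : rel T := fun x y => e x y && ~~ F x y.

Definition valid_centers (d : T -> T -> R) (E' : rel T) (c : T -> T -> T) : Prop :=
  forall x y, E' x y ->
    [/\ c x y != x, c x y != y, c x y = c y x &
        forall z, z != x -> z != y -> d x (c x y) + d (c x y) y <= d x z + d z y].

Definition construct (E' : rel T) (c : T -> T -> T) : rel T := fun x y =>
  E' x y || [exists u, exists v, E' u v && (ueq x y u (c u v) || ueq x y (c u v) v)].

End GraphDefs.

Definition ip : 'I_4 := @Ordinal 4 0 isT.
Definition ia : 'I_4 := @Ordinal 4 1 isT.
Definition ib : 'I_4 := @Ordinal 4 2 isT.
Definition iq : 'I_4 := @Ordinal 4 3 isT.

Definition ex_pt (R : realType) (eps : R) (i : 'I_4) : R :=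
  let eps' := eps / (4 - 2 * eps) in
  match val i with
  | 0 => 0
  | 1 => eps'
  | 2 => 1 + eps'
  | _ => 1 + 2 * eps'
  end.

Definition ex_dist (R : realType) (eps : R) (x y : 'I_4) : R :=
  `|ex_pt eps x - ex_pt eps y|.

Definition ex_path : rel 'I_4 := fun x y => ueq x y ip ia || ueq x y ia ib || ueq x y ib iq.

Definition ex_F : rel 'I_4 := fun x y => ueq x y ip ia || ueq x y ib iq.

From HB Require Import structures.
From mathcomp Require Import all_boot all_order all_algebra.
From mathcomp Require Import all_classical all_reals.
From mathcomp Require Import ring lra.
Import Order.TTheory GRing.Theory Num.Theory.
Local Open Scope ring_scope.

(* Write e' = eps / (4 - 2 eps), so that p, a, b, q sit at 0, e', 1 + e', 1 + 2e'.
   The point c_pa is b (via b the detour costs 2 + e', via q it costs 2 + 3e'),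
   and symmetrically c_bq = a, while c_ab is p or q; either way G adds exactly
   the edges {p,b} and {a,q}.  Removing F = {{p,a},{b,q}} leaves in G only the
   path p, b, a, q of length 3 + 2e', whereas K_S \ F keeps the edge {p,q} of
   length 1 + 2e'; the ratio is 3 - eps.  Both shortest-path distances are
   pinned down by exhibiting a walk together with a potential h satisfying
   h u - h v <= |uv| on every edge, which bounds every walk from below. *)

Lemma inf_attained (R : realType) (A : set R) (v : R) :
  A v -> (forall x, A x -> v <= x) -> inf A = v.
Proof.
move=> Av v_lb; apply/eqP; rewrite eq_le; apply/andP; split.
  by apply: ge_inf => //; exists v.
by apply: lb_le_inf; [exists v|].
Qed.

Section ShortestPaths.
Context {R : realType} {T : finType} {e : rel T} {d : T -> T -> R}.

Lemma walk_len_cons x y s : walk_len d x (y :: s) = d x y + walk_len d y s.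
Proof. by rewrite /walk_len /= big_cons. Qed.

Lemma potential_le_walk_len (h : T -> R) x s :
  (forall u v, e u v -> h u - h v <= d u v) -> path e x s ->
  h x - h (last x s) <= walk_len d x s.
Proof.
move=> h_pot; elim: s x => [|y s IHs] x /=.
  by rewrite /walk_len big_nil subrr.
case/andP=> e_xy /IHs le_walk; rewrite walk_len_cons.
have := h_pot _ _ e_xy; lra.
Qed.

Lemma sp_dist_potential {h : T -> R} {x s} :
  (forall u v, e u v -> h u - h v <= d u v) -> path e x s ->
  walk_len d x s = h x - h (last x s) ->
  sp_dist e d x (last x s) = walk_len d x s.
Proof.
move=> h_pot e_s len_s; apply: inf_attained; first by exists s.
move=> _ [s' [e_s' last_s' ->]]; rewrite len_s -last_s'.
exact: potential_le_walk_len.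
Qed.

Lemma sp_dist_edge x y :
  (forall u v w, d u w <= d u v + d v w) -> d y y = 0 -> e x y ->
  sp_dist e d x y = d x y.
Proof.
move=> d_triangle d_yy e_xy.
have pot u v : e u v -> d u y - d v y <= d u v.
  by move=> _; have := d_triangle u v y; lra.
have path_xy : path e x [:: y] by rewrite /= e_xy.
have len_xy : walk_len d x [:: y] = d x y - d y y.
  by rewrite walk_len_cons /walk_len big_nil addr0 d_yy subr0.
rewrite -[in LHS]/(last x [:: y]) (@sp_dist_potential (d^~ y) x _ pot path_xy len_xy).
by rewrite len_xy d_yy subr0.
Qed.

End ShortestPaths.

Lemma eq_construct (T : finType) (E' : rel T) (c c' : T -> T -> T) :
  (forall u v, E' u v -> c u v = c' u v) -> construct E' c =2 construct E' c'.
Proof.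
move=> eq_c x y; rewrite /construct; congr (_ || _).
apply: eq_existsb => u; apply: eq_existsb => v.
by case E'_uv: (E' u v) => //=; rewrite eq_c.
Qed.

Lemma ord4P (x : 'I_4) : [\/ x = ip, x = ia, x = ib | x = iq].
Proof.
case: x => [[|[|[|[|k]]]] lt_k4] //.
- by apply: Or41; apply: val_inj.
- by apply: Or42; apply: val_inj.
- by apply: Or43; apply: val_inj.
- by apply: Or44; apply: val_inj.
Qed.

Lemma existsI4 (P : pred 'I_4) : [exists u, P u] = [|| P ip, P ia, P ib | P iq].
Proof.
apply/existsP/idP => [[u]|]; last by case/or4P => Pu; eexists; exact: Pu.
by case: (ord4P u) => -> ->; rewrite ?orbT.
Qed.

Definition ex_graph : rel 'I_4 :=
  fun x y => [|| ex_path x y, ueq x y ip ib | ueq x y ia iq].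

(* The valid center choices on the path p, a, b, q: only c_ab = z is free. *)
Definition ex_center (z u v : 'I_4) : 'I_4 :=
  if ip \in [:: u; v] then ib else if iq \in [:: u; v] then ia else z.

Lemma construct_ex_center {z} : z \in [:: ip; iq] ->
  construct ex_path (ex_center z) =2 ex_graph.
Proof.
move=> z_pq x y; rewrite /construct !existsI4.
by move: z_pq; rewrite !inE => /orP[]/eqP->;
  case: x => [[|[|[|[|?]]]] ?]; case: y => [[|[|[|[|?]]]] ?].
Qed.

Section Example.
Context {R : realType} {eps : R}.
Hypotheses (eps_gt0 : 0 < eps) (eps_lt2 : eps < 2).

Lemma eps'_gt0 : 0 < eps / (4 - 2 * eps).
Proof. by rewrite divr_gt0 //; have := eps_lt2; lra. Qed.

Lemma ex_pt_le (x y : 'I_4) : (x <= y)%N -> ex_pt eps x <= ex_pt eps y.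
Proof.
have e'_gt0 := eps'_gt0.
by case: x y => [[|[|[|[|?]]]] ?] [[|[|[|[|?]]]] ?] //= _; rewrite /ex_pt /=; lra.
Qed.

Lemma ex_distE (x y : 'I_4) : ex_dist eps x y =
  if (x <= y)%N then ex_pt eps y - ex_pt eps x else ex_pt eps x - ex_pt eps y.
Proof.
rewrite /ex_dist; case: leqP => [le_xy|/ltnW le_yx].
  by rewrite distrC ger0_norm // subr_ge0 ex_pt_le.
by rewrite ger0_norm // subr_ge0 ex_pt_le.
Qed.

Section Centers.
Context {c : 'I_4 -> 'I_4 -> 'I_4}.
Hypothesis c_valid : valid_centers (ex_dist eps) ex_path c.

Lemma ex_center_pa : c ip ia = ib.
Proof.
have e'_gt0 := eps'_gt0.
have [+ + _ /(_ ib isT isT)] := c_valid ip ia isT.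
case: (ord4P (c ip ia)) => -> //; rewrite ?eqxx // => _ _ c_min; exfalso.
by move: c_min; rewrite !ex_distE /ex_pt /=; lra.
Qed.

Lemma ex_center_bq : c ib iq = ia.
Proof.
have e'_gt0 := eps'_gt0.
have [+ + _ /(_ ia isT isT)] := c_valid ib iq isT.
case: (ord4P (c ib iq)) => -> //; rewrite ?eqxx // => _ _ c_min; exfalso.
by move: c_min; rewrite !ex_distE /ex_pt /=; lra.
Qed.

Lemma ex_center_ab : c ia ib \in [:: ip; iq].
Proof.
have [+ + _ _] := c_valid ia ib isT.
by case: (ord4P (c ia ib)) => ->.
Qed.

Lemma construct_ex_path : construct ex_path c =2 ex_graph.
Proof.
move=> x y; rewrite -(construct_ex_center ex_center_ab).
apply: eq_construct => u v; rewrite /ex_center.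
have [_ _ c_ap _] := c_valid ip ia isT.
have [_ _ c_ba _] := c_valid ia ib isT.
have [_ _ c_qb _] := c_valid ib iq isT.
by case: (ord4P u) => ->; case: (ord4P v) => -> //= _;
  rewrite -?c_ap -?c_ba -?c_qb ?ex_center_pa ?ex_center_bq.
Qed.

End Centers.

Lemma sp_dist_ex_graph : sp_dist (rem_edges ex_graph ex_F) (ex_dist eps) ip iq =
  3 + 2 * (eps / (4 - 2 * eps)).
Proof.
have e'_gt0 := eps'_gt0.
pose h (x : 'I_4) := [:: 3 + 2 * (eps / (4 - 2 * eps)); 1 + eps / (4 - 2 * eps);
                         2 + eps / (4 - 2 * eps); 0]`_x.
have len_pbaq : walk_len (ex_dist eps) ip [:: ib; ia; iq] = h ip - h iq.
  by rewrite !walk_len_cons /walk_len big_nil !ex_distE /ex_pt /h /=; lra.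
have h_pot u v : rem_edges ex_graph ex_F u v -> h u - h v <= ex_dist eps u v.
  rewrite ex_distE /h /ex_pt.
  by case: u v => [[|[|[|[|?]]]] ?] [[|[|[|[|?]]]] ?] //= _; lra.
by rewrite (sp_dist_potential h_pot _ len_pbaq) // len_pbaq /h /= subr0.
Qed.

Lemma sp_dist_complete : sp_dist (rem_edges (@complete_rel _) ex_F) (ex_dist eps) ip iq =
  1 + 2 * (eps / (4 - 2 * eps)).
Proof.
rewrite sp_dist_edge //; first by rewrite ex_distE /ex_pt /= subr0.
- by move=> u v w; rewrite /ex_dist ler_distD.
- by rewrite /ex_dist subrr normr0.
Qed.

End Example.

Lemma ex_stretch (R : realFieldType) (eps : R) : eps != 2 ->
  (3 + 2 * (eps / (4 - 2 * eps))) / (1 + 2 * (eps / (4 - 2 * eps))) = 3 - eps.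
Proof.
move=> eps_neq2; have den_neq0 : 4 - 2 * eps != 0.
  by apply: contra eps_neq2; rewrite subr_eq0 => /eqP den0; apply/eqP; lra.
have -> : 1 + 2 * (eps / (4 - 2 * eps)) = 4 / (4 - 2 * eps) by field.
have -> : 3 + 2 * (eps / (4 - 2 * eps)) = (12 - 4 * eps) / (4 - 2 * eps) by field.
by field.
Qed.

Theorem mainTheorem3 (R : realType) (eps : R) (c : 'I_4 -> 'I_4 -> 'I_4) :
  0 < eps < 1 ->
  valid_centers (ex_dist eps) ex_path c ->
  (forall x y : 'I_4, construct ex_path c x y =
     [|| ex_path x y, ueq x y ip ib | ueq x y ia iq]) /\
  sp_dist (rem_edges (construct ex_path c) ex_F) (ex_dist eps) ip iq
    / sp_dist (rem_edges (@complete_rel _) ex_F) (ex_dist eps) ip iq = 3 - eps.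
Proof.
move=> /andP[eps_gt0 eps_lt1] c_valid.
have eps_lt2 : eps < 2 by lra.
have G_eq := construct_ex_path eps_gt0 eps_lt2 c_valid.
split=> //.
have -> : rem_edges (construct ex_path c) ex_F = rem_edges ex_graph ex_F.
  by apply/funext => x; apply/funext => y; rewrite /rem_edges G_eq.
rewrite sp_dist_ex_graph // sp_dist_complete //.
by apply: ex_stretch; apply/eqP => eps2; lra.
Qed.
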